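(* Let $b=2$, $\gamma\in(1/2,1)$ and $\psi(x)=-2\pi\sin(2\pi x)$. If $\gamma^3\le\sqrt2/8$, then $e(1)=1$.
   Context: $\mathcal{A}=\{0,1\}$. $S(x,\mathbf{i})=\sum_{n\ge1}\gamma^{n-1}\psi\big(\frac{x+i_1+i_22+\cdots+i_n2^{n-1}}{2^n}\big)$ for $\mathbf{i}\in\mathcal{A}^{\mathbb{Z}^+}$, $S'=\partial_xS$. Sequences $\mathbf{i},\mathbf{j}$ are $(\varepsilon,\delta)$-tangent at $x_0$ if $|S(x_0,\mathbf{i})-S(x_0,\mathbf{j})|\le\varepsilon$ and $|S'(x_0,\mathbf{i})-S'(x_0,\mathbf{j})|\le\delta$. $E(q,x_0;\varepsilon,\delta)$: pairs $(\mathbf{k},\mathbf{l})\in\mathcal{A}^q\times\mathcal{A}^q$ such that some concatenations $\mathbf{ku},\mathbf{lv}$ ($\mathbf{u},\mathbf{v}\in\mathcal{A}^{\mathbb{Z}^+}$) are $(\varepsilon,\delta)$-tangent at $x_0$. For $J\subset\mathbb{R}$: $E(q,J)=\bigcap_{\varepsilon,\delta>0}\bigcup_{x\in J}E(q,x;\varepsilon,\delta)$, $e(q,J)=\max_{\mathbf{k}}\#\{\mathbf{l}:(\mathbf{k},\mathbf{l})\in E(q,J)\}$, and $e(q)=\lim_{p\to\infty}\max_{0\le k<2^p}e(q,[k/2^p,(k+1)/2^p])$. *)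

From Stdlib Require Import Reals Lra List Classical ClassicalEpsilon.
Import ListNotations.
Open Scope R_scope.

Definition psi (x : R) : R := - 2 * PI * sin (2 * PI * x).

(* A sequence i in {0,1}^{Z+} is encoded as  i : nat -> bool  with
   i_1 = i 0, i_2 = i 1, ...  (true = 1, false = 0). *)
Definition digit (c : bool) : R := if c then 1 else 0.

Fixpoint dsum (i : nat -> bool) (n : nat) : R :=
  match n with
  | O => 0
  | S m => dsum i m + digit (i m) * 2 ^ m
  end.

(* (m+1)-th term (m = n-1) of the series S(x,i):
   gamma^(n-1) psi((x + i_1 + i_2 2 + ... + i_n 2^(n-1)) / 2^n) *)
Definition Sterm (gamma x : R) (i : nat -> bool) (m : nat) : R :=
  gamma ^ m * psi ((x + dsum i (S m)) / 2 ^ (S m)).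

Definition Sfun (gamma x : R) (i : nat -> bool) : R :=
  epsilon (inhabits 0) (fun l => infinite_sum (Sterm gamma x i) l).

Definition Sder (gamma x : R) (i : nat -> bool) : R :=
  epsilon (inhabits 0)
    (fun l => derivable_pt_lim (fun y => Sfun gamma y i) x l).

Definition tangent (gamma x0 eps del : R) (i j : nat -> bool) : Prop :=
  Rabs (Sfun gamma x0 i - Sfun gamma x0 j) <= eps /\
  Rabs (Sder gamma x0 i - Sder gamma x0 j) <= del.

Definition concat (k : list bool) (u : nat -> bool) : nat -> bool :=
  fun n => if Nat.ltb n (length k) then nth n k false else u (n - length k)%nat.

Fixpoint all_words (q : nat) : list (list bool) :=
  match q with
  | O => [ [] ]
  | S q' => map (cons false) (all_words q') ++ map (cons true) (all_words q')
  end.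

Definition Ept (gamma : R) (q : nat) (x0 eps del : R) (k l : list bool) : Prop :=
  length k = q /\ length l = q /\
  exists u v : nat -> bool, tangent gamma x0 eps del (concat k u) (concat l v).

Definition EJ (gamma : R) (q : nat) (J : R -> Prop) (k l : list bool) : Prop :=
  forall eps del, 0 < eps -> 0 < del ->
    exists x, J x /\ Ept gamma q x eps del k l.

Definition decide (P : Prop) : bool :=
  if excluded_middle_informative P then true else false.

Definition eJk (gamma : R) (q : nat) (J : R -> Prop) (k : list bool) : nat :=
  length (filter (fun l => decide (EJ gamma q J k l)) (all_words q)).

Definition eJ (gamma : R) (q : nat) (J : R -> Prop) : nat :=
  fold_right Nat.max 0%nat (map (eJk gamma q J) (all_words q)).

Definition dyadic (p k : nat) : R -> Prop :=
  fun x => INR k / 2 ^ p <= x <= (INR k + 1) / 2 ^ p.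

Definition emax (gamma : R) (q p : nat) : nat :=
  fold_right Nat.max 0%nat (map (fun k => eJ gamma q (dyadic p k)) (seq 0 (2 ^ p))).

Definition e_eq (gamma : R) (q m : nat) : Prop :=
  Un_cv (fun p => INR (emax gamma q p)) (INR m).

(* Write θ_m = 2π(x + i_1 + ... + i_{m+1} 2^m)/2^{m+1}, so that S(x,i) = Σ γ^m (-2π sin θ_m)
   and θ_m ≡ 2θ_{m+1} (mod 2π).  The explicit quadratic trigonometric polynomial F = [potential]
   satisfies γ(s + F(c,s)) ≤ F(c² - s², 2cs) on the unit circle for 1/2 ≤ γ ≤ 0.5613, and
   γ³ ≤ √2/8 forces γ ≤ 0.5613.  Telescoping this along the sequence (θ_m) bounds ±S(x,i) in
   terms of θ_0 alone, while S'(x,i) = Σ (γ/2)^m (-2π² cos θ_m) lies within 2π²(γ/2)/(1 - γ/2)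
   < 0.8π² of its first term.  Sequences starting with 0 and with 1 have θ_0 = πx and πx + π;
   for x ∈ [0,1], if |cos πx| ≤ 0.41 their values differ by at least 2π/100, otherwise their
   derivatives differ by at least 4π²/100.  So on every dyadic interval only the diagonal pairs
   are tangent, e(1,J) = 1 for each of them, and e(1) = 1. *)

From Stdlib Require Import Reals Lra Lia List ClassicalEpsilon Ranalysis5.
From Coquelicot Require Import Coquelicot.
Import ListNotations.
Open Scope R_scope.

Lemma Un_cv_const (c : R) : Un_cv (fun _ => c) c.
Proof. intros eps Heps; exists 0%nat; intros n _; unfold Rdist; rewrite Rminus_diag, Rabs_R0; lra. Qed.

Lemma Un_cv_le_bound (u : nat -> R) (l b : R) : Un_cv u l -> (forall n, u n <= b) -> l <= b.
Proof. intros Hu Hb; exact (Rle_cv_lim Hb Hu (Un_cv_const b)). Qed.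

Lemma Un_cv_scal (c : R) (u : nat -> R) (l : R) : Un_cv u l -> Un_cv (fun n => c * u n) (c * l).
Proof. intros Hu; exact (CV_mult _ _ _ _ (Un_cv_const c) Hu). Qed.

Lemma geometric_series_cv (C r : R) : 0 <= r < 1 ->
  Un_cv (sum_f_R0 (fun n => C * r ^ n)) (C / (1 - r)).
Proof.
  intros Hr eps Heps.
  destruct (Un_cv_scal C _ _ (GP_infinite r ltac:(rewrite Rabs_pos_eq; lra)) eps Heps) as [N HN].
  exists N; intros n Hn; specialize (HN n Hn).
  rewrite scal_sum in HN; erewrite sum_eq; [exact HN | intros; simpl; ring].
Qed.

Definition series (f : nat -> R) : R := epsilon (inhabits 0) (infinite_sum f).

Section DominatedSeries.

Variables (f : nat -> R) (C r : R).
Hypothesis r_range : 0 <= r < 1.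
Hypothesis f_dominated : forall n, Rabs (f n) <= C * r ^ n.

Lemma dominated_series_cv : Un_cv (sum_f_R0 f) (series f).
Proof.
  apply (epsilon_spec (inhabits 0) (infinite_sum f)).
  destruct (Rseries_CV_comp (fun n => Rabs (f n)) (fun n => C * r ^ n)) as [l Hl].
  - intros n; split; [apply Rabs_pos | apply f_dominated].
  - exists (C / (1 - r)); exact (geometric_series_cv C r r_range).
  - destruct (cv_cauchy_2 f (cauchy_abs f (cv_cauchy_1 _ (exist _ l Hl)))) as [l' Hl'].
    exists l'; exact Hl'.
Qed.

Lemma dominated_series_tail (n : nat) :
  Rabs (series f - sum_f_R0 f n) <= C * r ^ S n / (1 - r).
Proof.
  eapply Rle_trans.
  { exact (sum_maj1 (fun k _ => f k) (fun k => C * r ^ k) 0 (series f) (C / (1 - r)) n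
      dominated_series_cv (geometric_series_cv C r r_range) (fun k => f_dominated k)). }
  rewrite <- (sum_eq (fun k => r ^ k * C)) by (intros; ring).
  rewrite <- scal_sum, tech3 by lra.
  apply Req_le; field; lra.
Qed.

End DominatedSeries.

Lemma weighted_sum_le_potential (r : R) (v G : nat -> R) : 0 <= r ->
  (forall m, 0 <= G m) -> (forall m, r * (v (S m) + G (S m)) <= G m) ->
  forall N, sum_f_R0 (fun m => r ^ m * v m) N <= v 0%nat + G 0%nat.
Proof.
  intros Hr HG Hstep N.
  assert (Htel : forall M, sum_f_R0 (fun m => r ^ m * v m) M <= v 0%nat + G 0%nat - r ^ M * G M).
  { induction M as [|M IH]; simpl; [lra|].
    specialize (Hstep M); pose proof (pow_le r M Hr); nra. }
  specialize (Htel N); specialize (HG N); pose proof (pow_le r N Hr); nra.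
Qed.

Lemma derivable_pt_lim_sum_f_R0 (fn : nat -> R -> R) (dfn : nat -> R) (x : R) (N : nat) :
  (forall k, derivable_pt_lim (fn k) x (dfn k)) ->
  derivable_pt_lim (fun y => sum_f_R0 (fun k => fn k y) N) x (sum_f_R0 dfn N).
Proof.
  intros Hd; induction N as [|N IH]; simpl; [apply Hd|].
  exact (derivable_pt_lim_plus _ (fn (S N)) x _ _ IH (Hd (S N))).
Qed.

Lemma continuity_pt_sum_f_R0 (fn : nat -> R -> R) (x : R) (N : nat) :
  (forall k, continuity_pt (fn k) x) -> continuity_pt (fun y => sum_f_R0 (fun k => fn k y) N) x.
Proof.
  intros Hc; induction N as [|N IH]; simpl; [apply Hc|].
  exact (continuity_pt_plus _ (fn (S N)) x IH (Hc (S N))).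
Qed.

Definition angle (x : R) (i : nat -> bool) (m : nat) : R := 2 * PI * ((x + dsum i (S m)) / 2 ^ S m).

Definition Sder_term (gamma x : R) (i : nat -> bool) (m : nat) : R :=
  (gamma / 2) ^ m * (- 2 * PI * PI * cos (angle x i m)).

Definition Sder_series (gamma x : R) (i : nat -> bool) : R := series (Sder_term gamma x i).

Lemma Sterm_angle gamma x i m : Sterm gamma x i m = gamma ^ m * (- 2 * PI * sin (angle x i m)).
Proof. reflexivity. Qed.

Section Derivative.

Variable gamma : R.
Hypothesis gamma_range : 0 < gamma < 1.

Lemma Sterm_bound x i m : Rabs (Sterm gamma x i m) <= 2 * PI * gamma ^ m.
Proof.
  pose proof PI_RGT_0; pose proof (SIN_bound (angle x i m)).
  rewrite Sterm_angle, Rabs_mult, (Rabs_pos_eq (gamma ^ m)) by (apply pow_le; lra).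
  rewrite Rmult_comm; apply Rmult_le_compat_r; [apply pow_le; lra|].
  apply Rabs_le; nra.
Qed.

Lemma Sder_term_bound x i m : Rabs (Sder_term gamma x i m) <= 2 * PI * PI * (gamma / 2) ^ m.
Proof.
  pose proof PI_RGT_0; pose proof (COS_bound (angle x i m)).
  unfold Sder_term; rewrite Rabs_mult, (Rabs_pos_eq ((gamma / 2) ^ m)) by (apply pow_le; lra).
  rewrite Rmult_comm; apply Rmult_le_compat_r; [apply pow_le; lra|].
  apply Rabs_le; split; nra.
Qed.

Lemma Sfun_cv x i : Un_cv (sum_f_R0 (Sterm gamma x i)) (Sfun gamma x i).
Proof. apply (dominated_series_cv _ (2 * PI) gamma); [lra | apply Sterm_bound]. Qed.

Lemma Sder_series_tail x i n :
  Rabs (Sder_series gamma x i - sum_f_R0 (Sder_term gamma x i) n)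
  <= 2 * PI * PI * (gamma / 2) ^ S n / (1 - gamma / 2).
Proof. apply dominated_series_tail; [lra | apply Sder_term_bound]. Qed.

Lemma Sterm_derivable x i m : derivable_pt_lim (fun y => Sterm gamma y i m) x (Sder_term gamma x i m).
Proof.
  unfold Sterm, Sder_term, angle, psi; apply is_derive_Reals; auto_derive; [easy|].
  unfold Rdiv; rewrite Rpow_mult_distr, pow_inv; simpl dsum; simpl pow.
  field; apply pow_nonzero; lra.
Qed.

Lemma Sder_term_continuous x i m : continuity_pt (fun y => Sder_term gamma y i m) x.
Proof. unfold Sder_term, angle; reg. Qed.

Lemma Sder_partial_sums_CVU i c (r : posreal) :
  CVU (fun n y => sum_f_R0 (Sder_term gamma y i) n) (fun y => Sder_series gamma y i) c r.
Proof.
  intros eps Heps; pose proof PI_RGT_0.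
  set (K := 2 * PI * PI / (1 - gamma / 2)).
  assert (HK : 0 < K) by (unfold K; apply Rdiv_lt_0_compat; nra).
  destruct (pow_lt_1_zero (gamma / 2) ltac:(rewrite Rabs_pos_eq; lra) (eps / K)
              ltac:(apply Rdiv_lt_0_compat; lra)) as [N HN].
  exists N; intros n y Hn _.
  eapply Rle_lt_trans; [apply Sder_series_tail|].
  specialize (HN (S n) ltac:(lia)); rewrite Rabs_pos_eq in HN by (apply pow_le; lra).
  apply (Rmult_lt_compat_l K) in HN; [|exact HK].
  replace (K * (eps / K)) with eps in HN by (field; lra).
  replace (2 * PI * PI * (gamma / 2) ^ S n / (1 - gamma / 2)) with (K * (gamma / 2) ^ S n)
    by (unfold K; field; lra).
  exact HN.
Qed.

Lemma Sfun_derivable x i : derivable_pt_lim (fun y => Sfun gamma y i) x (Sder_series gamma x i).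
Proof.
  pose (r := mkposreal 1 Rlt_0_1).
  apply (derivable_pt_lim_CVU (fun n y => sum_f_R0 (Sterm gamma y i) n)
           (fun n y => sum_f_R0 (Sder_term gamma y i) n)
           (fun y => Sfun gamma y i) (fun y => Sder_series gamma y i) x x r).
  - apply Boule_center.
  - intros y n _; apply derivable_pt_lim_sum_f_R0; intros k; apply Sterm_derivable.
  - intros y _; apply Sfun_cv.
  - apply Sder_partial_sums_CVU.
  - apply (CVU_continuity _ _ x r (Sder_partial_sums_CVU i x r)).
    intros n y _; apply continuity_pt_sum_f_R0; intros k; apply Sder_term_continuous.
Qed.

Lemma Sder_eq x i : Sder gamma x i = Sder_series gamma x i.
Proof.
  apply (uniqueness_limite (fun y => Sfun gamma y i) x); [|apply Sfun_derivable].
  apply (epsilon_spec (inhabits 0) (fun l => derivable_pt_lim (fun y => Sfun gamma y i) x l)).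
  exists (Sder_series gamma x i); apply Sfun_derivable.
Qed.

End Derivative.

Definition potential (c s : R) : R :=
  807/1000 - 19/100*c - 88/1000*s - 146/10000*(c^2 - s^2) - 19/1000*(2*c*s).

Lemma potential_nonneg c s : c^2 + s^2 = 1 -> 0 <= potential c s.
Proof.
  intros Hc; unfold potential.
  pose proof (pow2_ge_0 (c - s)); pose proof (pow2_ge_0 (c + s)).
  assert (-1 <= c <= 1) by nra; assert (-1 <= s <= 1) by nra.
  nra.
Qed.

Lemma monomial_bound_on_circle k s (i j : nat) : k^2 + s^2 = 1 -> -1 <= k^i * s^j <= 1.
Proof.
  intros Hc.
  assert (Hk : Rabs k <= 1) by (apply Rabs_le; nra).
  assert (Hs : Rabs s <= 1) by (apply Rabs_le; nra).
  assert (Habs : Rabs (k^i * s^j) <= 1).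
  { rewrite Rabs_mult, <- !RPow_abs.
    pose proof (pow_incr (Rabs k) 1 i (conj (Rabs_pos k) Hk)).
    pose proof (pow_incr (Rabs s) 1 j (conj (Rabs_pos s) Hs)).
    pose proof (pow_le (Rabs k) i (Rabs_pos k)); pose proof (pow_le (Rabs s) j (Rabs_pos s)).
    rewrite pow1 in *; nra. }
  revert Habs; unfold Rabs; destruct (Rcase_abs (k^i * s^j)); lra.
Qed.

Ltac pose_monomial_bounds k s Hc :=
  pose proof (monomial_bound_on_circle k s 0 1 Hc);
  pose proof (monomial_bound_on_circle k s 1 0 Hc);
  pose proof (monomial_bound_on_circle k s 1 1 Hc);
  pose proof (monomial_bound_on_circle k s 2 0 Hc);
  pose proof (monomial_bound_on_circle k s 2 1 Hc);
  pose proof (monomial_bound_on_circle k s 3 0 Hc);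
  pose proof (monomial_bound_on_circle k s 3 1 Hc);
  pose proof (monomial_bound_on_circle k s 4 0 Hc).

(* Sum-of-squares certificates: the difference of the two sides is p² + q² + (a combination of
   monomials each bounded by 1 on the circle) + (k² + s² - 1)·t. *)
Lemma potential_step_half k s : k^2 + s^2 = 1 ->
  (1/2) * (s + potential k s) <= potential (k^2 - s^2) (2*k*s).
Proof.
  intros Hc.
  pose_monomial_bounds k s Hc.
  pose proof (pow2_ge_0 ((-83/5000)*(k^0*s^0) + (-81/5000)*(k^0*s^1) + (2051/10000)*(k^0*s^2) + (-1689/5000)*(k^0*s^3) + (4399/10000)*(k^0*s^4) + (-139/10000)*(k^1*s^0) + (879/5000)*(k^1*s^1) + (-2109/10000)*(k^1*s^2) + (-2051/10000)*(k^2*s^0) + (5067/5000)*(k^2*s^1) + (-13197/5000)*(k^2*s^2) + (703/10000)*(k^3*s^0) + (4399/10000)*(k^4*s^0))).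
  pose proof (pow2_ge_0 ((-27/1250)*(k^0*s^0) + (-139/10000)*(k^0*s^1) + (879/10000)*(k^0*s^2) + (-703/10000)*(k^0*s^3) + (81/5000)*(k^1*s^0) + (-2051/5000)*(k^1*s^1) + (5067/5000)*(k^1*s^2) + (-4399/2500)*(k^1*s^3) + (-879/10000)*(k^2*s^0) + (2109/10000)*(k^2*s^1) + (-1689/5000)*(k^3*s^0) + (4399/2500)*(k^3*s^1))).
  assert (Hcirc : (k^2+s^2-1)*((-36284577/100000000)*(k^0*s^0) + (11430261/25000000)*(k^0*s^1) + (-6946209/12500000)*(k^0*s^2) + (924747/2000000)*(k^0*s^3) + (-192582/390625)*(k^0*s^4) + (7429911/25000000)*(k^0*s^5) + (-19351201/100000000)*(k^0*s^6) + (-475813/5000000)*(k^1*s^0) + (4222009/25000000)*(k^1*s^1) + (-6454289/50000000)*(k^1*s^2) + (3866721/25000000)*(k^1*s^3) + (-3092497/50000000)*(k^1*s^4) + (-1056513/6250000)*(k^2*s^0) + (20268123/50000000)*(k^2*s^1) + (-15628147/25000000)*(k^2*s^2) + (7429911/12500000)*(k^2*s^3) + (-58053603/100000000)*(k^2*s^4) + (-801689/10000000)*(k^3*s^0) + (3866721/25000000)*(k^3*s^1) + (-3092497/25000000)*(k^3*s^2) + (-3302899/25000000)*(k^4*s^0) + (7429911/25000000)*(k^4*s^1) + (-58053603/100000000)*(k^4*s^2) + (-3092497/50000000)*(k^5*s^0) + (-19351201/100000000)*(k^6*s^0)) = 0)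
    by (replace (k^2+s^2-1) with 0 by lra; ring).
  unfold potential; lra.
Qed.

Lemma potential_step_top k s : k^2 + s^2 = 1 ->
  (5613/10000) * (s + potential k s) <= potential (k^2 - s^2) (2*k*s).
Proof.
  intros Hc.
  pose_monomial_bounds k s Hc.
  pose proof (pow2_ge_0 ((-267/10000)*(k^0*s^0) + (-521/10000)*(k^0*s^1) + (113/400)*(k^0*s^2) + (-256/625)*(k^0*s^3) + (2733/10000)*(k^0*s^4) + (-107/2500)*(k^1*s^0) + (299/1250)*(k^1*s^1) + (-2847/10000)*(k^1*s^2) + (-113/400)*(k^2*s^0) + (768/625)*(k^2*s^1) + (-8199/5000)*(k^2*s^2) + (949/10000)*(k^3*s^0) + (2733/10000)*(k^4*s^0))).
  pose proof (pow2_ge_0 ((-87/2500)*(k^0*s^0) + (-107/2500)*(k^0*s^1) + (299/2500)*(k^0*s^2) + (-949/10000)*(k^0*s^3) + (521/10000)*(k^1*s^0) + (-113/200)*(k^1*s^1) + (768/625)*(k^1*s^2) + (-2733/2500)*(k^1*s^3) + (-299/2500)*(k^2*s^0) + (2847/10000)*(k^2*s^1) + (-256/625)*(k^3*s^0) + (2733/2500)*(k^3*s^1))).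
  assert (Hcirc : (k^2+s^2-1)*((-8753427/25000000)*(k^0*s^0) + (12942147/25000000)*(k^0*s^1) + (-55080551/100000000)*(k^0*s^2) + (5064893/10000000)*(k^0*s^3) + (-10147139/25000000)*(k^0*s^4) + (87456/390625)*(k^0*s^5) + (-7469289/100000000)*(k^0*s^6) + (-5390589/50000000)*(k^1*s^0) + (4525159/25000000)*(k^1*s^1) + (-208017/1250000)*(k^1*s^2) + (817167/6250000)*(k^1*s^3) + (-2593617/50000000)*(k^1*s^4) + (-561291/4000000)*(k^2*s^0) + (19628893/50000000)*(k^2*s^1) + (-12573553/25000000)*(k^2*s^2) + (174912/390625)*(k^2*s^3) + (-22407867/100000000)*(k^2*s^4) + (-455223/6250000)*(k^3*s^0) + (817167/6250000)*(k^3*s^1) + (-2593617/25000000)*(k^3*s^2) + (-1213207/12500000)*(k^4*s^0) + (87456/390625)*(k^4*s^1) + (-22407867/100000000)*(k^4*s^2) + (-2593617/50000000)*(k^5*s^0) + (-7469289/100000000)*(k^6*s^0)) = 0)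
    by (replace (k^2+s^2-1) with 0 by lra; ring).
  unfold potential; lra.
Qed.

Lemma potential_step g k s : 1/2 <= g <= 5613/10000 -> k^2 + s^2 = 1 ->
  g * (s + potential k s) <= potential (k^2 - s^2) (2*k*s).
Proof.
  (* both sides are affine in g *)
  intros Hg Hc; pose proof (potential_step_half k s Hc); pose proof (potential_step_top k s Hc).
  destruct (Rle_or_lt 0 (s + potential k s)); nra.
Qed.

Lemma angle_double x i m : angle x i m = 2 * angle x i (S m) - 2 * PI * digit (i (S m)).
Proof.
  unfold angle; change (dsum i (S (S m))) with (dsum i (S m) + digit (i (S m)) * 2 ^ S m).
  change (2 ^ S (S m)) with (2 * 2 ^ S m); field; apply pow_nonzero; lra.
Qed.

Lemma cos_angle_double x i m :
  cos (angle x i m) = cos (angle x i (S m)) ^ 2 - sin (angle x i (S m)) ^ 2.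
Proof.
  rewrite angle_double; destruct (i (S m)); simpl digit.
  - rewrite Rmult_1_r, cos_minus, cos_2PI, sin_2PI, cos_2a; ring.
  - rewrite Rmult_0_r, Rminus_0_r, cos_2a; ring.
Qed.

Lemma sin_angle_double x i m :
  sin (angle x i m) = 2 * cos (angle x i (S m)) * sin (angle x i (S m)).
Proof.
  rewrite angle_double; destruct (i (S m)); simpl digit.
  - rewrite Rmult_1_r, sin_minus, cos_2PI, sin_2PI, sin_2a; ring.
  - rewrite Rmult_0_r, Rminus_0_r, sin_2a; ring.
Qed.

Lemma cos2_sin2 a : cos a ^ 2 + sin a ^ 2 = 1.
Proof. pose proof (sin2_cos2 a); unfold Rsqr in *; lra. Qed.

Lemma Sfun_signed_le gamma x i (sigma : R) : 1/2 < gamma <= 5613/10000 -> sigma ^ 2 = 1 ->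
  sigma * Sfun gamma x i <=
  2 * PI * (- (sigma * sin (angle x i 0)) + potential (cos (angle x i 0)) (- (sigma * sin (angle x i 0)))).
Proof.
  intros Hg Hsigma; pose proof PI_RGT_0.
  apply (Un_cv_le_bound _ _ _ (Un_cv_scal sigma _ _ (Sfun_cv gamma ltac:(lra) x i))); intros N.
  rewrite scal_sum, (sum_eq _ (fun m => gamma ^ m * (2 * PI * - (sigma * sin (angle x i m)))))
    by (intros; rewrite Sterm_angle; ring).
  set (c m := cos (angle x i m)); set (s m := - (sigma * sin (angle x i m))).
  assert (Hs2 : forall m, s m ^ 2 = sin (angle x i m) ^ 2).
  { intros m; transitivity (sigma ^ 2 * sin (angle x i m) ^ 2); [unfold s; ring | rewrite Hsigma; ring]. }
  assert (Hcirc : forall m, c m ^ 2 + s m ^ 2 = 1) by (intros m; rewrite Hs2; apply cos2_sin2).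
  eapply Rle_trans.
  { apply (weighted_sum_le_potential gamma (fun m => 2 * PI * s m)
             (fun m => 2 * PI * potential (c m) (s m))); [lra| |].
    - intros m; apply Rmult_le_pos; [lra | apply potential_nonneg, Hcirc].
    - intros m.
      replace (c m) with (c (S m) ^ 2 - s (S m) ^ 2)
        by (rewrite Hs2; symmetry; apply cos_angle_double).
      replace (s m) with (2 * c (S m) * s (S m))
        by (unfold c, s; rewrite (sin_angle_double x i m); ring).
      pose proof (potential_step gamma (c (S m)) (s (S m)) ltac:(lra) (Hcirc (S m))); nra. }
  apply Req_le; unfold c, s; ring.
Qed.

Lemma Sder_near_first_term gamma x i : 0 < gamma < 1 ->
  Rabs (Sder gamma x i + 2 * PI * PI * cos (angle x i 0)) <= 2 * PI * PI * (gamma / 2 / (1 - gamma / 2)).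
Proof.
  intros Hg; rewrite Sder_eq by exact Hg.
  eapply Rle_trans; [|eapply Rle_trans; [apply (Sder_series_tail gamma Hg x i 0)|]].
  - unfold Sder_term; simpl; apply Req_le; f_equal; ring.
  - apply Req_le; simpl; field; lra.
Qed.

Lemma angle_concat_false x u : angle x (concat [false] u) 0 = PI * x.
Proof. unfold angle; simpl; unfold digit; field. Qed.

Lemma angle_concat_true x u : angle x (concat [true] u) 0 = PI * x + PI.
Proof. unfold angle; simpl; unfold digit; field. Qed.

Lemma potential_gap c s : 0 <= s -> c^2 + s^2 = 1 -> c^2 <= (41/100)^2 ->
  - 2 * s + potential c (- s) + potential (- c) (- s) <= - 1/100.
Proof. intros Hs Hc Hsmall; assert (912/1000 <= s) by nra; unfold potential; nra. Qed.

Lemma separation gamma x u v : 1/2 < gamma <= 5613/10000 -> 0 <= x <= 1 ->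
  2 * PI / 100 <= Rabs (Sfun gamma x (concat [false] u) - Sfun gamma x (concat [true] v)) \/
  4 * PI * PI / 100 <= Rabs (Sder gamma x (concat [false] u) - Sder gamma x (concat [true] v)).
Proof.
  intros Hg Hx; pose proof PI_RGT_0.
  set (c := cos (PI * x)); set (s := sin (PI * x)).
  assert (Hs : 0 <= s) by (apply sin_ge_0; nra).
  assert (Hcirc : c^2 + s^2 = 1) by apply cos2_sin2.
  destruct (Rle_or_lt (c^2) ((41/100)^2)) as [Hsmall|Hlarge].
  - left.
    pose proof (Sfun_signed_le gamma x (concat [false] u) 1 Hg ltac:(ring)) as Hup.
    pose proof (Sfun_signed_le gamma x (concat [true] v) (-1) Hg ltac:(ring)) as Hlow.
    rewrite angle_concat_false in Hup; rewrite angle_concat_true, neg_sin, neg_cos in Hlow.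
    fold c s in Hup, Hlow.
    rewrite !Rmult_1_l in Hup; replace (- (-1 * - s)) with (- s) in Hlow by ring.
    pose proof (Rmult_le_compat_l (2 * PI) _ _ ltac:(lra) (potential_gap c s Hs Hcirc Hsmall)).
    rewrite Rabs_left1; lra.
  - right.
    pose proof (Sder_near_first_term gamma x (concat [false] u) ltac:(lra)) as Hder0.
    pose proof (Sder_near_first_term gamma x (concat [true] v) ltac:(lra)) as Hder1.
    rewrite angle_concat_false in Hder0; rewrite angle_concat_true, neg_cos in Hder1.
    fold c in Hder0, Hder1; apply Rabs_le_between in Hder0; apply Rabs_le_between in Hder1.
    assert (HH : gamma / 2 / (1 - gamma / 2) <= 4/10) by (apply Rle_div_l; lra).
    assert (HP : 0 < PI * PI) by nra.
    pose proof (Rmult_le_compat_l (PI * PI) _ _ (Rlt_le _ _ HP) HH).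
    destruct (Rle_or_lt 0 c).
    + assert (Hc : 41/100 <= c) by nra.
      pose proof (Rmult_le_compat_l (PI * PI) _ _ (Rlt_le _ _ HP) Hc).
      eapply Rle_trans, Rabs_maj2; lra.
    + assert (Hc : c <= - 41/100) by nra.
      pose proof (Rmult_le_compat_l (PI * PI) _ _ (Rlt_le _ _ HP) Hc).
      eapply Rle_trans, Rle_abs; lra.
Qed.

Lemma gamma_le_of_cube_le g : 0 < g -> g ^ 3 <= sqrt 2 / 8 -> g <= 5613/10000.
Proof.
  intros Hg H.
  assert (sqrt 2 < 141422/100000).
  { pose proof (sqrt_pos 2); pose proof (sqrt_sqrt 2 ltac:(lra)); nra. }
  destruct (Rle_or_lt g (5613/10000)); [assumption | nra].
Qed.

Lemma decide_true (P : Prop) : P -> decide P = true.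
Proof. intros H; unfold decide; destruct (excluded_middle_informative P); [reflexivity | contradiction]. Qed.

Lemma decide_false (P : Prop) : ~ P -> decide P = false.
Proof. intros H; unfold decide; destruct (excluded_middle_informative P); [contradiction | reflexivity]. Qed.

Lemma dyadic_left_end p k : dyadic p k (INR k / 2 ^ p).
Proof.
  split; [lra|].
  apply Rmult_le_compat_r; [apply Rlt_le, Rinv_0_lt_compat, pow_lt | ]; lra.
Qed.

Lemma dyadic_in_unit p k x : (k < 2 ^ p)%nat -> dyadic p k x -> 0 <= x <= 1.
Proof.
  intros Hk [Hlo Hhi]; pose proof (pow_lt 2 p ltac:(lra)); pose proof (pos_INR k).
  assert (Hk' : INR k + 1 <= 2 ^ p).
  { replace 2 with (INR 2) by reflexivity; rewrite <- S_INR, <- pow_INR; apply le_INR; exact Hk. }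
  split.
  - eapply Rle_trans; [|exact Hlo]; apply Rdiv_le_0_compat; lra.
  - eapply Rle_trans; [exact Hhi|]; apply Rle_div_l; lra.
Qed.

Lemma EJ_refl gamma q J x0 w : J x0 -> length w = q -> EJ gamma q J w w.
Proof.
  intros Hx0 Hw eps del Heps Hdel; exists x0; split; [exact Hx0|].
  split; [exact Hw | split; [exact Hw|]].
  exists (fun _ => false), (fun _ => false); unfold tangent.
  rewrite !Rminus_diag, Rabs_R0; lra.
Qed.

Lemma EJ_sym gamma q J k l : EJ gamma q J k l -> EJ gamma q J l k.
Proof.
  intros H eps del Heps Hdel.
  destruct (H eps del Heps Hdel) as (x & Jx & Hk & Hl & u & v & Hval & Hder).
  exists x; split; [exact Jx|]; split; [exact Hl | split; [exact Hk|]].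
  exists v, u; split; rewrite Rabs_minus_sym; assumption.
Qed.

Lemma not_EJ_false_true gamma J : 1/2 < gamma <= 5613/10000 -> (forall x, J x -> 0 <= x <= 1) ->
  ~ EJ gamma 1 J [false] [true].
Proof.
  intros Hg HJ HE; pose proof PI_RGT_0.
  destruct (HE (PI / 100) (2 * PI * PI / 100) ltac:(lra) ltac:(nra))
    as (x & Jx & _ & _ & u & v & Hval & Hder).
  destruct (separation gamma x u v Hg (HJ x Jx)); nra.
Qed.

Lemma eJ_one gamma J x0 : 1/2 < gamma <= 5613/10000 -> (forall x, J x -> 0 <= x <= 1) -> J x0 ->
  eJ gamma 1 J = 1%nat.
Proof.
  intros Hg HJ Hx0; unfold eJ, eJk; simpl.
  rewrite (decide_true (EJ gamma 1 J [false] [false])) by (apply (EJ_refl _ _ _ x0); auto).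
  rewrite (decide_true (EJ gamma 1 J [true] [true])) by (apply (EJ_refl _ _ _ x0); auto).
  rewrite (decide_false (EJ gamma 1 J [false] [true])) by (apply not_EJ_false_true; auto).
  rewrite (decide_false (EJ gamma 1 J [true] [false]))
    by (intros H; apply (not_EJ_false_true gamma J Hg HJ), EJ_sym, H).
  reflexivity.
Qed.

Lemma fold_max_map_const (f : nat -> nat) (c : nat) (l : list nat) : l <> [] ->
  (forall k, In k l -> f k = c) -> fold_right Nat.max 0%nat (map f l) = c.
Proof.
  induction l as [|a l IH]; intros Hne Hf; [contradiction|].
  change (Nat.max (f a) (fold_right Nat.max 0%nat (map f l)) = c).
  rewrite (Hf a (or_introl eq_refl)); destruct l as [|b l]; [simpl; lia|].
  rewrite IH by (discriminate || (intros k Hk; apply Hf; right; exact Hk)); lia.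
Qed.

Theorem proposition5 (gamma : R) :
  1 / 2 < gamma < 1 ->
  gamma ^ 3 <= sqrt 2 / 8 ->
  e_eq gamma 1 1.
Proof.
  intros Hg Hcube.
  pose proof (gamma_le_of_cube_le gamma ltac:(lra) Hcube) as Hg'.
  assert (Hemax : forall p, emax gamma 1 p = 1%nat).
  { intros p; unfold emax; apply fold_max_map_const.
    - pose proof (Nat.pow_nonzero 2 p ltac:(lia)).
      destruct (2 ^ p)%nat; [lia | discriminate].
    - intros k Hk; apply in_seq in Hk.
      apply (eJ_one _ _ (INR k / 2 ^ p)); [lra | | apply dyadic_left_end].
      intros x; apply dyadic_in_unit; lia. }
  unfold e_eq; intros eps Heps; exists 0%nat; intros n _.
  rewrite Hemax; unfold Rdist; rewrite Rminus_diag, Rabs_R0; exact Heps.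
Qed.
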